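(* Let $\mathcal I$ be an ideal on $\omega$ and let $X$ be a normal space. (1) $X\in(\mathcal I\text{-p},\mathcal I\text{-}\sigma\text{-u})$ if and only if $X\in(\mathcal I\text{-p},\mathcal I\text{-qn})$ and $X\in(\mathcal I\text{-qn},\mathcal I\text{-}\sigma\text{-u})$. (2) $\mathrm{non}(\mathcal I\text{-p},\mathcal I\text{-}\sigma\text{-u})=\min\{\mathrm{non}(\mathcal I\text{-p},\mathcal I\text{-qn}),\mathrm{non}(\mathcal I\text{-qn},\mathcal I\text{-}\sigma\text{-u})\}$.
   Context: An ideal on $\omega$ is a family $\mathcal I\subseteq\mathcal P(\omega)$ closed under finite unions and subsets, containing all finite sets, with $\omega\notin\mathcal I$. A real sequence $(a_n)$ is $\mathcal I$-convergent to $0$ if $\{n:|a_n|\ge\varepsilon\}\in\mathcal I$ for every $\varepsilon>0$. For a sequence $(f_n)$ of real-valued functions on a set $X$: $\mathcal I$-p ($\mathcal I$-pointwise convergence to $0$) means $(f_n(x))$ is $\mathcal I$-convergent to $0$ for each $x\in X$; $\mathcal I$-u ($\mathcal I$-uniform) means $\{n:\exists x\in X\,(|f_n(x)|\ge\varepsilon)\}\in\mathcal I$ for each $\varepsilon>0$; $\mathcal I$-$\sigma$-u ($\mathcal I$-$\sigma$-uniform) means $X=\bigcup_{k\in\omega}X_k$ for some sets $X_k$ with $(f_n\restriction X_k)$ $\mathcal I$-uniformly convergent to $0$ for each $k$; $\mathcal I$-qn ($\mathcal I$-quasi-normal) means there is a sequence $(\varepsilon_n)$ of positive reals $\mathcal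 I$-convergent to $0$ with $\{n:|f_n(x)|\ge\varepsilon_n\}\in\mathcal I$ for each $x\in X$. $\mathcal C(X)$ is the set of continuous real-valued functions on $X$. A normal space is a Hausdorff space in which disjoint closed sets have disjoint open neighbourhoods. For convergence notions $\alpha,\beta$, $(\alpha,\beta)$ is the class of normal spaces $X$ such that for every $(f_n)$ in $\mathcal C(X)$: $f_n\to0$ in sense $\alpha$ iff $f_n\to0$ in sense $\beta$; $\mathrm{non}(\alpha,\beta)$ is the least cardinality of a normal space not in $(\alpha,\beta)$ ($\infty$ if none; $\min$ is taken with the convention $\kappa<\infty$ for every cardinal $\kappa$). *)

From HB Require Import structures.
From mathcomp Require Import all_boot all_order all_algebra.
From mathcomp Require Import all_classical all_reals all_analysis.
Set Implicit Arguments. Unset Strict Implicit. Unset Printing Implicit Defensive.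
Import Order.TTheory GRing.Theory Num.Theory.
Import numFieldNormedType.Exports.
Local Open Scope classical_set_scope.
Local Open Scope ring_scope.

Definition is_ideal (I : set (set nat)) : Prop :=
  [/\ (forall A B, I A -> I B -> I (A `|` B)),
      (forall A B, B `<=` A -> I A -> I B),
      (forall A, finite_set A -> I A)
    & ~ I setT].

Definition Iconv0 (R : realType) (I : set (set nat)) (a : nat -> R) : Prop :=
  forall eps : R, 0 < eps -> I [set n | eps <= `|a n|].

Definition conv_notion (R : realType) :=
  forall X : topologicalType, (nat -> X -> R) -> Prop.

Definition Ip (R : realType) (I : set (set nat)) : conv_notion R :=
  fun X f => forall x : X, Iconv0 I (fun n => f n x).

Definition Iu_on (R : realType) (I : set (set nat)) (X : Type)
  (D : set X) (f : nat -> X -> R) : Prop :=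
  forall eps : R, 0 < eps -> I [set n | exists2 x, D x & eps <= `|f n x|].

Definition Isigmau (R : realType) (I : set (set nat)) : conv_notion R :=
  fun X f => exists Xk : nat -> set X,
    \bigcup_k Xk k = [set: X] /\ forall k, Iu_on I (Xk k) f.

Definition Iqn (R : realType) (I : set (set nat)) : conv_notion R :=
  fun X f => exists eps : nat -> R,
    [/\ (forall n, 0 < eps n), Iconv0 I eps &
        forall x : X, I [set n | eps n <= `|f n x|]].

Definition normal (X : topologicalType) : Prop :=
  hausdorff_space X /\
  forall A B : set X, closed A -> closed B -> A `&` B = set0 ->
    exists U V : set X, [/\ open U, open V, A `<=` U, B `<=` V & U `&` V = set0].

Definition in_class (R : realType) (alpha beta : conv_notion R)
  (X : topologicalType) : Prop :=
  normal X /\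
  forall f : nat -> X -> R, (forall n, continuous (f n)) ->
    (alpha X f <-> beta X f).

(* Cardinal invariant non(alpha,beta), described without a cardinal type:
   - non_infty: non(alpha,beta) = infinity (no normal space outside the class);
   - le_non T: |T| <= non(alpha,beta) (every normal space outside the class
     has cardinality at least |T|; vacuous when non = infinity);
   - non_is T: non(alpha,beta) = |T| (some normal space outside the class
     has cardinality |T|, and |T| <= non). *)
Definition non_infty (R : realType) (alpha beta : conv_notion R) : Prop :=
  forall X : topologicalType, normal X -> in_class alpha beta X.

Definition le_non (R : realType) (alpha beta : conv_notion R) (T : Type) : Prop :=
  forall X : topologicalType, normal X -> ~ in_class alpha beta X ->
    card_le [set: T] [set: X].

Definition non_is (R : realType) (alpha beta : conv_notion R) (T : Type) : Prop :=
  (exists X : topologicalType,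
     [/\ normal X, ~ in_class alpha beta X & card_eq [set: X] [set: T]])
  /\ le_non alpha beta T.

Arguments Ip R I : clear implicits.
Arguments Iqn R I : clear implicits.
Arguments Isigmau R I : clear implicits.

From mathcomp Require Import all_boot all_order all_algebra.
From mathcomp Require Import all_classical all_reals all_analysis.
Import Order.TTheory GRing.Theory Num.Theory.
Local Open Scope classical_set_scope.
Local Open Scope ring_scope.

(* For every ideal, I-sigma-uniform convergence implies I-quasi-normal
   convergence, which implies I-pointwise convergence.  For the first
   implication, let A_j be the I-small set of n such that |f_n| >= 1/(j+2)
   somewhere on X_0 u ... u X_j, and take eps_n = 1/(K_n + 1), where K_n is
   the first j < n with n in A_j (or n if there is none).  Whenever
   gamma => beta => alpha in this sense, a space is in (alpha, gamma) iff it
   is in both (alpha, beta) and (beta, gamma); the statement about non is the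
   same fact read on the spaces lying outside these classes. *)

Section Ideal.
Context {I : set (set nat)} (hI : is_ideal I).

Lemma idealU {A B} : I A -> I B -> I (A `|` B).
Proof. by case: hI => hU *; apply: hU. Qed.

Lemma idealS {A B} : B `<=` A -> I A -> I B.
Proof. by case: hI => _ + _ _; apply. Qed.

Lemma ideal_setUII m {A} : I A -> I (`I_m `|` A).
Proof. by case: hI => hU _ hF _; apply/hU/hF/finite_II. Qed.

Lemma ideal_bigcup_leq {P : nat -> set nat} j :
  (forall i, I (P i)) -> I [set n | exists2 i, (i <= j)%N & P i n].
Proof.
move=> IP; elim: j => [|j IH].
  by apply: idealS (IP 0%N) => n [i]; rewrite leqn0 => /eqP ->.
apply: idealS (idealU IH (IP j.+1)) => n [i]; rewrite leq_eqVlt ltnS.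
by case/orP=> [/eqP -> | le_ij] Pin; [right | left; exists i].
Qed.

Lemma ideal_diagonal (A : nat -> set nat) : (forall j, I (A j)) ->
  exists K : nat -> nat,
    (forall m, I [set n | (K n <= m)%N]) /\
    (forall j n, (j < K n)%N -> ~ A j n).
Proof.
move=> IA; pose K n := find (fun j => `[< A j n >]) (iota 0 n).
have le_K n : (K n <= n)%N by rewrite -[leqRHS](size_iota 0 n) find_size.
exists K; split=> [m | j n lt_jK].
  apply: idealS (ideal_setUII m.+1 (ideal_bigcup_leq m IA)) => n /= le_Km.
  have [lt_nm | le_mn] := ltnP n m.+1; [by left | right; exists (K n) => //].
  have lt_Kn : (K n < n)%N by apply: leq_ltn_trans le_Km le_mn.
  have has_A : has (fun j => `[< A j n >]) (iota 0 n).
    by rewrite has_find size_iota.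
  by have /asboolP := nth_find 0%N has_A; rewrite nth_iota ?add0n.
have /asboolPn := before_find 0%N lt_jK.
by rewrite nth_iota ?add0n //; apply: leq_trans lt_jK (le_K n).
Qed.

End Ideal.

Section Convergence.
Context {R : realType} {I : set (set nat)} (hI : is_ideal I).
Variables (X : topologicalType) (f : nat -> X -> R).

Lemma Iqn_Ip : Iqn R I X f -> Ip R I X f.
Proof.
case=> eps [eps_gt0 eps_I small_x] x e e_gt0.
apply: (idealS hI) (idealU hI (small_x x) (eps_I e e_gt0)) => n /= le_e.
have [le_eps | lt_eps] := leP (eps n) `|f n x|; first by left.
by right; rewrite gtr0_norm // (le_trans le_e) // ltW.
Qed.

Lemma Isigmau_Iqn : Isigmau R I X f -> Iqn R I X f.
Proof.
case=> Xk [cover Xk_u].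
pose large j i := [set n | exists2 x, Xk i x & ((j.+2)%:R)^-1 <= `|f n x|].
have [K [K_small K_min]] : exists K : nat -> nat,
    (forall m, I [set n | (K n <= m)%N]) /\
    (forall j n, (j < K n)%N -> ~ exists2 i, (i <= j)%N & large j i n).
  apply: ideal_diagonal => // j; apply: ideal_bigcup_leq => // i.
  by apply: Xk_u; rewrite invr_gt0 ltr0n.
exists (fun n => ((K n).+1%:R)^-1); split=> [n | e e_gt0 | x].
- by rewrite invr_gt0 ltr0n.
- pose m := Num.truncn e^-1.
  have lt_e : ((m.+1)%:R)^-1 < e.
    by rewrite invf_plt ?posrE ?ltr0n //; exact: truncnS_gt.
  apply: (idealS hI) (K_small m) => n /=.
  rewrite ger0_norm ?invr_ge0 ?ler0n // leqNgt => le_e; apply/negP => lt_mK.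
  have : ((K n).+1%:R)^-1 <= ((m.+1)%:R)^-1 :> R.
    by rewrite lef_pV2 ?posrE ?ltr0n // ler_nat ltnS ltnW.
  by move=> /(le_trans le_e) /(lt_le_trans lt_e); rewrite ltxx.
- have [k _ Xk_x] : (\bigcup_k Xk k) x by rewrite cover.
  apply: (idealS hI) (K_small k) => n /= le_f; rewrite leqNgt; apply/negP => lt_kK.
  have K_gt0 : (0 < K n)%N by apply: leq_ltn_trans lt_kK.
  apply: (K_min (K n).-1 n); first by rewrite ltn_predL.
  by exists k; [rewrite -ltnS prednK | exists x; rewrite ?prednK].
Qed.

End Convergence.

Section ClassSplit.
Context {R : realType} {alpha beta gamma : conv_notion R}.
Hypotheses (gamma_beta : forall X f, gamma X f -> beta X f)
           (beta_alpha : forall X f, beta X f -> alpha X f).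

Lemma in_class_split {X : topologicalType} : normal X ->
  in_class alpha gamma X <-> in_class alpha beta X /\ in_class beta gamma X.
Proof.
move=> nX; split=> [[_ ag] | [[_ ab] [_ bg]]].
  split; split=> // f cf.
  - by split; [move/(ag f cf)/gamma_beta | exact: beta_alpha].
  - by split; [move/beta_alpha/(ag f cf) | exact: gamma_beta].
split=> // f cf; split; first by move/(ab f cf)/(bg f cf).
by move/gamma_beta/beta_alpha.
Qed.

Lemma notin_class_split {X : topologicalType} : normal X ->
  ~ in_class alpha gamma X <-> ~ in_class alpha beta X \/ ~ in_class beta gamma X.
Proof.
move=> nX; split=> [not_ag | [] + /(in_class_split nX) []] //.
have [ab | not_ab] := pselect (in_class alpha beta X); [right=> bg | by left].
by apply: not_ag; apply/(in_class_split nX).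
Qed.

Lemma non_infty_split :
  non_infty alpha gamma <-> non_infty alpha beta /\ non_infty beta gamma.
Proof.
split=> [ag | [ab bg] X nX].
  by split=> X nX; have [] := (in_class_split nX).1 (ag X nX).
by apply/(in_class_split nX); split; [exact: ab | exact: bg].
Qed.

Lemma le_non_split T :
  le_non alpha gamma T <-> le_non alpha beta T /\ le_non beta gamma T.
Proof.
split=> [ag | [ab bg] X nX /(notin_class_split nX) [] not_in].
- by split=> X nX not_in; apply: ag => //; apply/(notin_class_split nX);
    [left | right].
- exact: ab.
- exact: bg.
Qed.

Lemma non_is_split T :
  non_is alpha gamma T <->
    (non_is alpha beta T /\ le_non beta gamma T) \/
    (non_is beta gamma T /\ le_non alpha beta T).
Proof.
split=> [[[X [nX /(notin_class_split nX) not_in card_X]] /le_non_split [ab bg]]|].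
  by case: not_in => ?; [left | right]; do 2?split=> //; exists X.
case=> [[[[X [nX not_in card_X]] ab] bg] | [[[X [nX not_in card_X]] bg] ab]].
- split; last exact/le_non_split.
  by exists X; split=> //; apply/(notin_class_split nX); left.
- split; last exact/le_non_split.
  by exists X; split=> //; apply/(notin_class_split nX); right.
Qed.

End ClassSplit.

Theorem corollary3p6 (R : realType) (I : set (set nat)) (hI : is_ideal I) :
  (* (1) *)
  (forall X : topologicalType, normal X ->
     (in_class (Ip R I) (Isigmau R I) X <->
      in_class (Ip R I) (Iqn R I) X /\ in_class (Iqn R I) (Isigmau R I) X))
  /\
  (* (2) non(p, sigma-u) = min{ non(p, qn), non(qn, sigma-u) } *)
  ((non_infty (Ip R I) (Isigmau R I) <->
      non_infty (Ip R I) (Iqn R I) /\ non_infty (Iqn R I) (Isigmau R I))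
   /\
   forall T : Type,
     non_is (Ip R I) (Isigmau R I) T <->
       (non_is (Ip R I) (Iqn R I) T /\ le_non (Iqn R I) (Isigmau R I) T) \/
       (non_is (Iqn R I) (Isigmau R I) T /\ le_non (Ip R I) (Iqn R I) T)).
Proof.
have sigmau_qn := @Isigmau_Iqn R I hI; have qn_p := @Iqn_Ip R I hI.
split; first by move=> X nX; exact (in_class_split sigmau_qn qn_p nX).
by split; [exact: non_infty_split sigmau_qn qn_p | exact: non_is_split sigmau_qn qn_p].
Qed.
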